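(* Let $R$ be an amenable affine algebra over a field $K$ with no zero divisors. Then $R$ has Goldie dimension $1$, i.e. any two nonzero left ideals $I,J$ of $R$ satisfy $I\cap J\neq 0$.
   Context: An affine algebra is a finitely generated associative algebra over $K$, not necessarily unital. $R$ is amenable if there exist finite-dimensional $K$-subspaces $W_1\subseteq W_2\subseteq\cdots$ with $\bigcup_nW_n=R$ such that for every $r\in R$, $\lim_{n\to\infty}\dim_K(W_nr+W_n)/\dim_K(W_n)=1$. *)

(* A (possibly non-unital) associative K-algebra is given by a
   K-vector space A (lmodType K) together with a bilinear associative product. *)
From HB Require Import structures.
From mathcomp Require Import all_boot all_order all_algebra.
Set Implicit Arguments. Unset Strict Implicit. Unset Printing Implicit Defensive.
Import Order.TTheory GRing.Theory Num.Theory.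
Local Open Scope ring_scope.

Section AlgDefs.
Variables (K : fieldType) (A : lmodType K) (mul : A -> A -> A).

Definition is_algebra : Prop :=
  [/\ forall x y z, mul x (mul y z) = mul (mul x y) z,
      forall (a : K) x y z, mul (a *: x + y) z = a *: mul x z + mul y z
    & forall (a : K) x y z, mul z (a *: x + y) = a *: mul z x + mul z y].

Definition subalgebra (S : A -> Prop) : Prop :=
  [/\ S 0, forall x y, S x -> S y -> S (x + y),
      forall (a : K) x, S x -> S (a *: x)
    & forall x y, S x -> S y -> S (mul x y)].

Definition affine : Prop :=
  exists gens : seq A, forall x : A,
    forall S : A -> Prop, subalgebra S -> (forall g, g \in gens -> S g) -> S x.

Definition no_zero_divisors : Prop :=
  forall x y : A, mul x y = 0 -> x = 0 \/ y = 0.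

Definition span (s : seq A) : A -> Prop :=
  fun x => exists c : 'I_(size s) -> K, x = \sum_(i < size s) c i *: s`_i.

Definition lin_indep (s : seq A) : Prop :=
  forall c : 'I_(size s) -> K,
    \sum_(i < size s) c i *: s`_i = 0 -> forall i, c i = 0.

Definition has_dim (W : A -> Prop) (d : nat) : Prop :=
  exists s : seq A, [/\ size s = d, lin_indep s & forall x, W x <-> span s x].

Definition subsp_Wr_plus_W (W : A -> Prop) (r : A) : A -> Prop :=
  fun y => exists w1 w2, [/\ W w1, W w2 & y = mul w1 r + w2].

(* amenability: finite-dimensional subspaces W_1 <= W_2 <= ... exhausting A
   with dim(W_n r + W_n)/dim(W_n) -> 1 for every r *)
Definition amenable : Prop :=
  exists (W : nat -> A -> Prop) (dW : nat -> nat) (dWr : A -> nat -> nat),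
    [/\ forall n, has_dim (W n) (dW n),
        forall n x, W n x -> W n.+1 x,
        forall x, exists n, W n x,
        forall r n, has_dim (subsp_Wr_plus_W (W n) r) (dWr r n)
      & forall (r : A) (eps : rat), 0 < eps -> exists N : nat, forall n : nat,
          (N <= n)%N -> `|((dWr r n)%:R / (dW n)%:R : rat) - 1| < eps].

Definition left_ideal (I : A -> Prop) : Prop :=
  [/\ I 0, forall x y, I x -> I y -> I (x + y),
      forall (a : K) x, I x -> I (a *: x)
    & forall r x, I x -> I (mul r x)].

Definition nonzero_set (I : A -> Prop) : Prop := exists x, I x /\ x <> 0.

End AlgDefs.

From mathcomp Require Import all_boot all_order all_algebra.
From mathcomp Require Import lra zify.
From Stdlib Require Import Classical_Prop.
Set Implicit Arguments. Unset Strict Implicit. Unset Printing Implicit Defensive.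
Import Order.TTheory GRing.Theory Num.Theory.
Local Open Scope ring_scope.

(* Suppose I and J meet trivially and pick nonzero a in I, b in J.  For any
   finite-dimensional subspace W, the linear map
     W^3 -> (Wa + W) x (Wb + W),   (u, v, t) |-> (ua + t, vb + t)
   is injective: in its kernel ua = vb lies in I and J, so it vanishes, hence
   u = v = 0 as there are no zero divisors, and then t = 0.  Thus
   3 dim W <= dim (Wa + W) + dim (Wb + W), whereas amenability provides W with
   both summands below 3/2 dim W. *)

Section FreeFamilies.
Variables (K : fieldType) (V : lmodType K).

Definition free_family (I : finType) (g : I -> V) : Prop :=
  forall c : I -> K, \sum_i c i *: g i = 0 -> forall i, c i = 0.

Definition in_span (J : finType) (h : J -> V) (x : V) : Prop :=
  exists c : J -> K, x = \sum_j c j *: h j.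

Lemma in_span_mem (J : finType) (h : J -> V) j : in_span h (h j).
Proof.
exists (fun k => (k == j)%:R).
rewrite (bigD1 j) //= eqxx scale1r big1 ?addr0 // => k /negbTE ->.
by rewrite scale0r.
Qed.

Lemma in_span0 (J : finType) (h : J -> V) : in_span h 0.
Proof. by exists (fun _ => 0); rewrite big1 // => j _; rewrite scale0r. Qed.

Lemma free_family_card_leq (I J : finType) (g : I -> V) (h : J -> V) :
  free_family g -> (forall i, in_span h (g i)) -> (#|I| <= #|J|)%N.
Proof.
move=> free_g /fin_all_exists[c g_c].
pose C := \matrix_(i < #|I|, j < #|J|) c (enum_val i) (enum_val j).
suff /eqP <- : row_free C by exact: rank_leq_col.
rewrite -kermx_eq0; apply/rowV0P => v /sub_kermxP vC0; apply/rowP => i.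
suff /free_g v0 : \sum_x v 0 (enum_rank x) *: g x = 0.
  by rewrite -[i]enum_valK v0 mxE.
under eq_bigr do rewrite g_c scaler_sumr.
rewrite exchange_big big1 // => y _.
have := congr1 (fun w : 'rV_#|J| => w 0 (enum_rank y)) vC0.
rewrite !mxE (reindex _ (onW_bij _ (@enum_rank_bij I))) => vC0y.
have {}vC0y : \sum_x v 0 (enum_rank x) * c x y = 0.
  by rewrite -[RHS]vC0y; apply: eq_bigr => x _; rewrite mxE !enum_rankK.
by under eq_bigr do rewrite scalerA; rewrite -scaler_suml vC0y scale0r.
Qed.

End FreeFamilies.

Lemma sum_scale_pair (K : fieldType) (W1 W2 : lmodType K) (I : finType)
    (c : I -> K) (p : I -> W1) (q : I -> W2) :
  \sum_i c i *: (p i, q i) = (\sum_i c i *: p i, \sum_i c i *: q i).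
Proof. by rewrite [LHS]surjective_pairing !linear_sum. Qed.

Lemma in_span_pair (K : fieldType) (V1 V2 : lmodType K) (J1 J2 : finType)
    (h1 : J1 -> V1) (h2 : J2 -> V2) x1 x2 :
  in_span h1 x1 -> in_span h2 x2 ->
  in_span (fun j => match j with inl j1 => (h1 j1, 0) | inr j2 => (0, h2 j2) end)
          (x1, x2).
Proof.
move=> [c1 ->] [c2 ->].
exists (fun j => match j with inl j1 => c1 j1 | inr j2 => c2 j2 end).
rewrite big_sumType /= !sum_scale_pair.
by rewrite -!scaler_suml !scaler0; congr pair; rewrite /= ?addr0 ?add0r.
Qed.

Lemma ltn_3half_of_ratio (x d : nat) :
  `|x%:R / d%:R - 1 : rat| < 1 / 2 -> (2 * x < 3 * d)%N.
Proof.
have [->|d_gt0] := posnP d; first by rewrite invr0 mulr0 sub0r normrN normr1.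
move=> /ltr_normlP[_]; rewrite ltrBlDr ltr_pdivrMr ?ltr0n // => lt_x.
by rewrite -(ltr_nat rat) !natrM; lra.
Qed.

Section LeftMultiplication.
Variables (K : fieldType) (A : lmodType K) (mul : A -> A -> A).
Hypothesis mulDl : forall (a : K) x y z, mul (a *: x + y) z = a *: mul x z + mul y z.

Lemma mul0l z : mul 0 z = 0.
Proof.
have := mulDl 1 0 0 z; rewrite !scale1r addr0 => mul0_twice.
by apply: (addrI (mul 0 z)); rewrite -mul0_twice addr0.
Qed.

Lemma mul_suml (I : finType) (c : I -> K) (x : I -> A) z :
  mul (\sum_i c i *: x i) z = \sum_i c i *: mul (x i) z.
Proof.
apply: (big_rec2 (fun s t => mul s z = t)) => [|i y t _ <-]; first exact: mul0l.
exact: mulDl.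
Qed.

Lemma subsp_Wr_plus_W_mul (W : A -> Prop) r w :
  W 0 -> W w -> subsp_Wr_plus_W mul W r (mul w r).
Proof. by move=> W0 Ww; exists w, 0; rewrite addr0. Qed.

Lemma subsp_Wr_plus_W_id (W : A -> Prop) r w :
  W 0 -> W w -> subsp_Wr_plus_W mul W r w.
Proof. by move=> W0 Ww; exists 0, w; rewrite mul0l add0r. Qed.

Section DisjointTranslates.
Variables (a b : A).
Hypotheses (a_reg : forall u, mul u a = 0 -> u = 0)
           (b_reg : forall v, mul v b = 0 -> v = 0)
           (disjoint_ab : forall u v, mul u a = mul v b -> mul u a = 0).

Definition translates_family (w : seq A)
    (k : 'I_(size w) + 'I_(size w) + 'I_(size w)) : A * A :=
  match k with
  | inl (inl i) => (mul w`_i a, 0)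
  | inl (inr i) => (0, mul w`_i b)
  | inr i => (w`_i, w`_i)
  end.

Lemma translates_family_free (w : seq A) :
  lin_indep w -> free_family (@translates_family w).
Proof.
move=> free_w c; rewrite !big_sumType /= !sum_scale_pair.
rewrite -!scaler_suml !scaler0 -!mul_suml.
set u := \sum_i c (inl (inl i)) *: w`_i; set v := \sum_i c (inl (inr i)) *: w`_i.
set t := \sum_i c (inr i) *: w`_i.
move=> sum0; have := congr1 snd sum0; have := congr1 fst sum0.
rewrite /= addr0 add0r => ua_t vb_t.
have ua_vb : mul u a = mul v b by apply: (addIr t); rewrite ua_t vb_t.
have u0 : u = 0 by apply: a_reg; exact: disjoint_ab ua_vb.
have v0 : v = 0 by apply: b_reg; rewrite -ua_vb; exact: disjoint_ab ua_vb.
have t0 : t = 0 by rewrite -ua_t u0 mul0l add0r.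
case=> [[i|i]|i].
- exact: (free_w (fun i => c (inl (inl i))) u0).
- exact: (free_w (fun i => c (inl (inr i))) v0).
- exact: (free_w (fun i => c (inr i)) t0).
Qed.

Lemma three_dim_leq_translates (W : A -> Prop) (d da db : nat) :
  has_dim W d -> has_dim (subsp_Wr_plus_W mul W a) da ->
  has_dim (subsp_Wr_plus_W mul W b) db -> (3 * d <= da + db)%N.
Proof.
move=> [w [<- free_w W_w]] [sa [<- _ span_a]] [sb [<- _ span_b]].
have W0 : W 0 by apply/W_w; exact: in_span0.
have Ww (i : 'I_(size w)) : W w`_i.
  by apply/W_w; exact: (in_span_mem (fun j : 'I_(size w) => w`_j)).
pose h (j : 'I_(size sa) + 'I_(size sb)) : A * A :=
  match j with inl j1 => (sa`_j1, 0) | inr j2 => (0, sb`_j2) end.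
have := free_family_card_leq (translates_family_free free_w) (h := h).
rewrite !card_sum !card_ord => leq_card.
suff span_h k : in_span h (@translates_family w k).
  by have := leq_card span_h; lia.
case: k => [[i|i]|i]; apply: in_span_pair; (apply/span_a || apply/span_b);
  by [apply: subsp_Wr_plus_W_mul | apply: subsp_Wr_plus_W_id].
Qed.

End DisjointTranslates.

End LeftMultiplication.

Theorem proposition6 (K : fieldType) (A : lmodType K) (mul : A -> A -> A) :
  is_algebra mul -> affine mul -> no_zero_divisors mul -> amenable mul ->
  forall I J : A -> Prop,
    left_ideal mul I -> left_ideal mul J -> nonzero_set I -> nonzero_set J ->
    exists x : A, [/\ I x, J x & x <> 0].
Proof.
move=> [_ mulDl _] _ mul_nzd [W [dW [dWr [W_dim _ _ Wr_dim near1]]]] I J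
  [_ _ _ I_mul] [_ _ _ J_mul] [a [Ia a0]] [b [Jb b0]].
apply: NNPP => no_common.
have IJ0 x : I x -> J x -> x = 0.
  by move=> Ix Jx; apply: NNPP => x0; apply: no_common; exists x.
have regular r : r <> 0 -> forall u, mul u r = 0 -> u = 0.
  by move=> r0 u /mul_nzd[].
have disjoint_ab u v : mul u a = mul v b -> mul u a = 0.
  by move=> uv; apply: IJ0; [exact: I_mul | rewrite uv; exact: J_mul].
have [Na near_a] := near1 a (1 / 2) isT.
have [Nb near_b] := near1 b (1 / 2) isT.
pose n := maxn Na Nb.
have := three_dim_leq_translates mulDl (regular a a0) (regular b b0) disjoint_ab
  (W_dim n) (Wr_dim a n) (Wr_dim b n).
have := ltn_3half_of_ratio (near_a n (leq_maxl _ _)).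
have := ltn_3half_of_ratio (near_b n (leq_maxr _ _)).
lia.
Qed.
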